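(* Let $k\in\mathbb{N}$, let $G_{\pm}(x)=|1+e^{2\pi i x}\pm e^{2\pi i (k+2)x}|^2$, and for $\rho\in\mathbb{N}$ put $A(\rho)=\sum_{\mu=0}^{\rho}\binom{\rho}{\mu}^2\binom{2\rho-2\mu}{\rho-\mu}$. Let $\rho\in\mathbb{N}$ with $\rho\le k+1$ and let $\tau>0$ be real. Then, for both choices of sign, $$\int_0^{1/2}G_{\pm}^{\tau}\le \tfrac12\,9^{\tau-\rho}A(\rho)\quad\text{if }\tau>\rho,\qquad \int_0^{1/2}G_{\pm}^{\tau}\le \tfrac12\,A(\rho)^{\tau/\rho}\quad\text{if }\tau<\rho.$$
   Context: The values $A(0),\dots,A(6)$ are $1,3,15,93,639,4653,35169$. For $\rho\le k+1$ one has $\int_0^{1/2}G_\pm^\rho=\frac12A(\rho)$, and $0\le G_\pm\le 9$. *)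

From HB Require Import structures.
From mathcomp Require Import all_boot all_order all_algebra.
From mathcomp Require Import all_classical all_reals all_analysis.
Set Implicit Arguments. Unset Strict Implicit. Unset Printing Implicit Defensive.
Import Order.TTheory GRing.Theory Num.Theory.
Local Open Scope ring_scope.

(* G_{+} (s = true) and G_{-} (s = false):
   G_pm(x) = |1 + e^{2 pi i x} pm e^{2 pi i (k+2) x}|^2, written as
   (real part)^2 + (imaginary part)^2. *)
Definition Gpm (R : realType) (s : bool) (k : nat) (x : R) : R :=
  let e : R := if s then 1 else -1 in
  (1 + cos (2 * pi * x) + e * cos (2 * pi * (k.+2)%:R * x)) ^+ 2
  + (sin (2 * pi * x) + e * sin (2 * pi * (k.+2)%:R * x)) ^+ 2.

Definition A (rho : nat) : nat :=
  (\sum_(mu < rho.+1) 'C(rho, mu) ^ 2 * 'C(2 * rho - 2 * mu, rho - mu))%N.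

(* Put z = e^{2 pi i x}.  Then G_pm = |1 + z pm z^{k+2}|^2, so G_pm^rho is the
   squared modulus of (1 + z pm z^{k+2})^rho, a polynomial in z whose monomial
   C(rho,c) C(rho-c,b) (pm 1)^c z^{b + (k+2) c} has pairwise distinct exponents
   as long as b <= rho <= k+1.  Since the cosines cos(2 pi n x) are orthogonal on
   [0, 1/2], the integral of G_pm^rho is half the sum of the squared
   coefficients, which is A(rho).  Both bounds then hold pointwise before
   integrating: for tau > rho because G_pm <= 9, and for tau < rho by the
   tangent line of the concave map y |-> y^(tau/rho) at y = A(rho). *)

From HB Require Import structures.
From mathcomp Require Import all_boot all_order all_algebra.
From mathcomp Require Import all_classical all_reals all_analysis.
From mathcomp Require Import complex.
From mathcomp Require Import ring lra zify.
Import Order.TTheory GRing.Theory Num.Theory.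
Local Open Scope ring_scope.
Local Open Scope classical_set_scope.
Import numFieldNormedType.Exports.

Lemma sum_ord_widen0 (V : nmodType) (n N : nat) (F : nat -> V) : (n <= N)%N ->
  (forall i, (n < i)%N -> F i = 0) -> \sum_(i < n.+1) F i = \sum_(i < N.+1) F i.
Proof.
move=> nN F0; elim: N nN => [|N IH]; first by rewrite leqn0 => /eqP->.
rewrite leq_eqVlt => /orP[/eqP->//|ltnN].
by rewrite IH // [RHS]big_ord_recr /= F0 ?addr0.
Qed.

Lemma sum_bin_sqr m : (\sum_(b < m.+1) 'C(m, b) ^ 2)%N = 'C(m + m, m).
Proof.
rewrite -binomial.Vandermonde; apply: eq_bigr => j _.
by rewrite bin_sub ?mulnn // -ltnS.
Qed.

Lemma A_sum_sqr rho : A rho =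
  (\sum_(i < rho.+1) \sum_(j < rho.+1) ('C(rho, i) * 'C(rho - i, j)) ^ 2)%N.
Proof.
apply: eq_bigr => i _; under eq_bigr do rewrite expnMn.
rewrite -big_distrr /=.
rewrite -(@sum_ord_widen0 nat (rho - i) rho (fun j => 'C(rho - i, j) ^ 2)%N);
  last 2 first.
- exact: leq_subr.
- by move=> j /bin_small ->.
by rewrite sum_bin_sqr; congr (_ * 'C(_, _))%N; lia.
Qed.

Lemma A_gt0 rho : (0 < A rho)%N.
Proof.
by rewrite A_sum_sqr big_ord_recl ltn_addr // big_ord_recl ltn_addr // bin0 bin0.
Qed.

Lemma sum_mul_eq_sqr (S : pzSemiRingType) (I : finType) (T : eqType)
    (w : I -> S) (e : I -> T) :
  {in [pred i | w i != 0] &, injective e} ->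
  \sum_i \sum_j w i * w j * (e i == e j)%:R = \sum_i w i ^+ 2.
Proof.
move=> e_inj; apply: eq_bigr => i _.
have [->|wi0] := eqVneq (w i) 0; first by rewrite expr0n big1 // => j _; rewrite !mul0r.
rewrite (bigD1 i) //= eqxx mulr1 big1 ?addr0 // => j ji.
have [->|wj0] := eqVneq (w j) 0; first by rewrite mulr0 mul0r.
case: eqP => [/e_inj eij|_]; last by rewrite mulr0.
by rewrite eij ?eqxx // inE in ji.
Qed.

Section interval_integrals.
Context {R : realType}.
Local Notation mu := (@lebesgue_measure R).
Implicit Types (a b c d x : R) (f : R -> R).

Lemma continuous_integrable_itv a b f : continuous f ->
  mu.-integrable `[a, b] (EFin \o f).
Proof.
move=> cf; apply: continuous_compact_integrable; first exact: segment_compact.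
exact: continuous_subspaceT.
Qed.

Lemma continuous_sum (I : Type) (s : seq I) (F : I -> R -> R) :
  (forall i, continuous (F i)) -> continuous (fun x => \sum_(i <- s) F i x).
Proof.
move=> cF; elim: s => [|i s IHs].
  by under eq_fun do rewrite big_nil; exact: cst_continuous.
by under eq_fun do rewrite big_cons; move=> x; apply: continuousD; [exact: cF|exact: IHs].
Qed.

Lemma Rintegral_sum a b (I : Type) (s : seq I) (F : I -> R -> R) :
  (forall i, continuous (F i)) ->
  \int[mu]_(x in `[a, b]) (\sum_(i <- s) F i x)
    = \sum_(i <- s) \int[mu]_(x in `[a, b]) F i x.
Proof.
move=> cF; elim: s => [|i s IHs].
  by under eq_Rintegral do rewrite big_nil; rewrite Rintegral_cst // mul0r big_nil.
under eq_Rintegral do rewrite big_cons.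
rewrite big_cons RintegralD // -?IHs //; first exact: continuous_integrable_itv.
exact/continuous_integrable_itv/continuous_sum.
Qed.

Lemma Rintegral_itv_cst a b c : a <= b -> \int[mu]_(x in `[a, b]) c = c * (b - a).
Proof.
rewrite le_eqVlt => /predU1P[<-|ab]; last first.
  by rewrite Rintegral_cst //= lebesgue_measure_itv /= lte_fin ab.
by rewrite set_itv1 Rintegral_set1 subrr mulr0.
Qed.

Lemma continuous_affine c d f : continuous f -> continuous (fun x => c * f x + d).
Proof.
move=> cf x; apply: (continuousD (f := fun y => c * f y) (g := fun=> d)).
  by apply: continuousM; [exact: cst_continuous|exact: cf].
exact: cst_continuous.
Qed.

Lemma Rintegral_affine a b c d f : a <= b -> continuous f ->
  \int[mu]_(x in `[a, b]) (c * f x + d)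
    = c * \int[mu]_(x in `[a, b]) f x + d * (b - a).
Proof.
move=> ab cf; have cfZ : continuous (fun x => c * f x).
  by move=> x; apply: continuousM; [exact: cst_continuous|exact: cf].
rewrite RintegralD //; try exact: continuous_integrable_itv.
rewrite RintegralZl ?Rintegral_itv_cst //.
  exact: continuous_integrable_itv.
apply: continuous_integrable_itv => x; exact: cst_continuous.
Qed.

Lemma continuous_cosZ c : continuous (fun x : R => cos (c * x)).
Proof.
by move=> x; apply: continuous_comp; [exact: mulrl_continuous|exact: continuous_cos].
Qed.

Lemma continuous_mulr_cosZ c d : continuous (fun x : R => c * cos (d * x)).
Proof.
move=> x; apply: (@continuousM _ _ (fun=> c) (fun y => cos (d * y))).
  exact: cst_continuous.
exact: continuous_cosZ.
Qed.

Lemma continuous_sinZ c : continuous (fun x : R => sin (c * x)).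
Proof.
by move=> x; apply: continuous_comp; [exact: mulrl_continuous|exact: continuous_sin].
Qed.

Lemma is_derive_sinZ c (x : R) :
  is_derive x 1 (fun y : R => sin (c * y)) (cos (c * x) * c).
Proof.
apply: (@is_derive1_comp _ sin (fun y => c * y)).
have := @is_deriveZ R R R id c x 1 1 _.
rewrite /GRing.scale /= mulr1.
by move/(_ (is_derive_id _ _)).
Qed.

Lemma Rintegral_cosZ a b c : a < b -> c != 0 ->
  \int[mu]_(x in `[a, b]) cos (c * x) = (sin (c * b) - sin (c * a)) / c.
Proof.
move=> ab c0; pose F x := c^-1 * sin (c * x).
have dF x : is_derive x 1 F (cos (c * x)).
  apply: (is_derive_eq (is_deriveZ _ (is_derive_sinZ c x))).
  by rewrite /GRing.scale /= mulrCA mulVf // mulr1.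
have cF : continuous F.
  move=> x; apply: (@continuousM _ _ (fun=> c^-1) (fun y => sin (c * y))).
    exact: cst_continuous.
  exact: continuous_sinZ.
rewrite /Rintegral (@continuous_FTC2 _ _ F _ _ ab) /=.
- by rewrite /F -mulrBr mulrC.
- exact/continuous_subspaceT/continuous_cosZ.
- split; first by move=> x _; case: (dF x).
    exact: cvg_at_right_filter (cF a).
  exact: cvg_at_left_filter (cF b).
- by move=> x _; rewrite derive1E; case: (dF x).
Qed.

Lemma sin_natr_mulpi (n : nat) : sin (n%:R * pi) = 0 :> R.
Proof.
by rewrite mulr_natl; have := alternatingn (@sinDpi R) n 0; rewrite add0r sin0 mulr0.
Qed.

Lemma Rintegral_cos_natrB (n m : nat) :
  \int[mu]_(x in `[0, 2^-1]) cos ((n%:R - m%:R) * (2 * pi * x))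
    = if n == m then 2^-1 else 0.
Proof.
under eq_Rintegral do rewrite mulrA.
have [->|nm] := eqVneq n m.
  under eq_Rintegral do rewrite subrr !mul0r cos0.
  by rewrite Rintegral_itv_cst ?subr0 ?mul1r.
have nm0 : (n%:R - m%:R) * (2 * pi) != 0 :> R.
  by rewrite mulf_neq0 ?subr_eq0 ?eqr_nat // mulf_neq0 ?pnatr_eq0 ?gt_eqF ?pi_gt0.
rewrite Rintegral_cosZ ?invr_gt0 // mulr0 sin0 subr0 (mulrC 2) mulrA mulfK //.
have [mn|/ltnW nm'] := leqP m n; first by rewrite -natrB // sin_natr_mulpi mul0r.
by rewrite -opprB -natrB // mulNr sinN sin_natr_mulpi oppr0 mul0r.
Qed.
End interval_integrals.

Section trigonometric_polynomials.
Context {R : realType}.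
Local Notation mu := (@lebesgue_measure R).
Local Open Scope complex_scope.

Definition expi (t : R) : R[i] := cos t +i* sin t.

Lemma expiX t n : expi t ^+ n = expi (n%:R * t).
Proof.
elim: n => [|n IH]; first by rewrite expr0 mul0r /expi cos0 sin0.
rewrite exprSr IH /expi -natr1 mulrDl mul1r cosD sinD.
by apply/eqP; rewrite eq_complex /=; apply/andP; split; apply/eqP; ring.
Qed.

Lemma sqr_normc (z : R[i]) : `|z| ^+ 2 = (complex.Re z ^+ 2 + complex.Im z ^+ 2)%:C.
Proof. by rewrite normc_def -rmorphXn sqr_sqrtr // addr_ge0 ?sqr_ge0. Qed.

Definition trigpoly_norm2 {I : finType} (w : I -> R) (e : I -> nat) (t : R) : R :=
  \sum_i \sum_j w i * w j * cos (((e i)%:R - (e j)%:R) * t).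

Lemma sqr_norm_trigpoly (I : finType) (w : I -> R) (e : I -> nat) t :
  `|\sum_i (w i)%:C * expi t ^+ e i| ^+ 2 = (trigpoly_norm2 w e t)%:C.
Proof.
rewrite sqr_normc (raddf_sum (@complex.Re R)) (raddf_sum (@complex.Im R)); congr (_%:C).
have ReE i : complex.Re ((w i)%:C * expi t ^+ e i) = w i * cos ((e i)%:R * t).
  by rewrite expiX /=; ring.
have ImE i : complex.Im ((w i)%:C * expi t ^+ e i) = w i * sin ((e i)%:R * t).
  by rewrite expiX /=; ring.
rewrite (eq_bigr _ (fun i _ => ReE i)) (eq_bigr _ (fun i _ => ImE i)).
rewrite /trigpoly_norm2 !expr2 !mulr_suml -big_split; apply: eq_bigr => i _.
rewrite !mulr_sumr -big_split; apply: eq_bigr => j _ /=.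
by rewrite mulrBl cosB; ring.
Qed.

Lemma continuous_trigpoly_norm2 (I : finType) (w : I -> R) (e : I -> nat) :
  continuous (trigpoly_norm2 w e).
Proof.
by apply: continuous_sum => i; apply: continuous_sum => j; exact: continuous_mulr_cosZ.
Qed.

Lemma Rintegral_trigpoly_norm2 (I : finType) (w : I -> R) (e : I -> nat) :
  \int[mu]_(x in `[0, 2^-1]) trigpoly_norm2 w e (2 * pi * x)
    = 2^-1 * \sum_i \sum_j w i * w j * (e i == e j)%:R.
Proof.
have cterm i j :
    continuous (fun x => w i * w j * cos (((e i)%:R - (e j)%:R) * (2 * pi * x))).
  by under eq_fun do rewrite [_ * (2 * pi * _)]mulrA; exact: continuous_mulr_cosZ.
rewrite Rintegral_sum => [|i]; last exact: continuous_sum.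
rewrite mulr_sumr; apply: eq_bigr => i _.
rewrite Rintegral_sum // mulr_sumr; apply: eq_bigr => j _.
rewrite RintegralZl ?Rintegral_cos_natrB //; last first.
  apply: continuous_integrable_itv.
  by under eq_fun do rewrite mulrA; exact: continuous_cosZ.
by case: eqP; rewrite ?mulr1 ?mulr0 // mulrC.
Qed.
End trigonometric_polynomials.

Section trinomial.
Context {S : comPzRingType}.

Definition trinomial_coef (rho : nat) (c : S) (p : 'I_rho.+1 * 'I_rho.+1) : S :=
  ('C(rho, p.1) * 'C(rho - p.1, p.2))%:R * c ^+ p.1.

Definition trinomial_exp (m rho : nat) (p : 'I_rho.+1 * 'I_rho.+1) : nat :=
  p.2 + m * p.1.

Lemma trinomial_expansion (z c : S) (m rho : nat) :
  (1 + z + c * z ^+ m) ^+ rho =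
  \sum_p trinomial_coef rho c p * z ^+ trinomial_exp m rho p.
Proof.
rewrite -(pair_bigA _ (fun i j =>
  trinomial_coef rho c (i, j) * z ^+ trinomial_exp m rho (i, j))) exprDn.
apply: eq_bigr => i _ /=.
rewrite exprDn (@sum_ord_widen0 _ (rho - i) rho
  (fun j => (1 ^+ (rho - i - j) * z ^+ j) *+ 'C(rho - i, j))); last 2 first.
- exact: leq_subr.
- by move=> j /bin_small ->; rewrite mulr0n.
rewrite -mulr_natr !mulr_suml; apply: eq_bigr => j _.
rewrite /trinomial_coef /trinomial_exp /= expr1n mul1r exprMn exprD exprM natrM.
rewrite -mulr_natr.
move: (z ^+ j) (c ^+ i) (z ^+ m ^+ i) ('C(rho, i)%:R) ('C(rho - i, j)%:R : S).
by move=> a b d e f; ring.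
Qed.

Lemma trinomial_coef_eq0 rho c (p : 'I_rho.+1 * 'I_rho.+1) :
  (rho - p.1 < p.2)%N -> trinomial_coef rho c p = 0.
Proof. by move=> lt_p; rewrite /trinomial_coef (bin_small lt_p) muln0 mul0r. Qed.

Lemma trinomial_exp_inj m rho : (rho < m)%N ->
  {in [pred p : 'I_rho.+1 * 'I_rho.+1 | p.2 <= rho - p.1]%N &,
    injective (trinomial_exp m rho)}.
Proof.
move=> rho_lt_m [i1 j1] [i2 j2]; rewrite !inE /trinomial_exp /= => le1 le2 eq12.
have j_lt_m (i j : nat) : (j <= rho - i -> j < m)%N.
  by move=> le_j; apply: leq_ltn_trans rho_lt_m; apply: leq_trans le_j (leq_subr _ _).
have ei : i1 = i2.
  have := congr1 (divn^~ m) eq12.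
  rewrite (addnC j1) (addnC j2) (mulnC m i1) (mulnC m i2).
  rewrite !divnMDl ?(leq_ltn_trans _ rho_lt_m) //.
  by rewrite !divn_small ?addn0 ?(j_lt_m _ _ le1) ?(j_lt_m _ _ le2) // => /val_inj.
have ej : j1 = j2 :> nat by move: eq12; rewrite ei => /addIn.
by rewrite ei; congr pair; apply: val_inj.
Qed.

Lemma sum_trinomial_coef_sqr rho c : c ^+ 2 = 1 ->
  \sum_p trinomial_coef rho c p ^+ 2 = (A rho)%:R.
Proof.
move=> c2; rewrite A_sum_sqr -(pair_bigA _ (fun i j => trinomial_coef rho c (i, j) ^+ 2)).
rewrite natr_sum; apply: eq_bigr => i _.
rewrite natr_sum; apply: eq_bigr => j _.
by rewrite /trinomial_coef /= exprMn exprAC c2 expr1n mulr1 natrX.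
Qed.
End trinomial.

Section power_interpolation.
Context {R : realType}.
Local Notation mu := (@lebesgue_measure R).

Lemma powR_le_tangent (g m p : R) : 0 <= g -> 0 < m -> 0 < p -> p < 1 ->
  g `^ p <= m `^ p * (p / m * g + (1 - p)).
Proof.
move=> g0 m0 p0 p1; have gm0 : 0 <= g / m by rewrite divr_ge0 // ltW.
have young : (g / m) `^ p * 1
    <= ((g / m) `^ p) `^ p^-1 / p^-1 + 1 `^ (1 - p)^-1 / (1 - p)^-1.
  by apply: conjugate_powR; rewrite ?powR_ge0 ?invr_gt0 ?subr_gt0 // !invrK addrC subrK.
rewrite mulr1 -powRrM mulfV ?gt_eqF // powRr1 // powR1 /= !invrK mul1r in young.
have -> : g `^ p = m `^ p * (g / m) `^ p.
  by rewrite -powRM ?(ltW m0) // mulrCA mulfV ?gt_eqF // mulr1.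
apply: ler_wpM2l; first exact: powR_ge0.
by have -> : p / m * g = g / m * p by ring.
Qed.

Context {a b M : R} {f : R -> R}.
Hypotheses (ab : a < b) (cf : continuous f).
Hypotheses (f_ge0 : forall x, 0 <= f x) (f_leM : forall x, f x <= M).

Let continuous_fX n : continuous (fun x : R => f x ^+ n).
Proof. by move=> x; exact: (continuous_comp (cf x) (@exprn_continuous _ n (f x))). Qed.

Lemma integrable_powR t : 0 <= t ->
  mu.-integrable `[a, b] (EFin \o (fun x => f x `^ t)).
Proof.
move=> t0; apply: measurable_bounded_integrable.
- exact: measurable_itv.
- by rewrite /= lebesgue_measure_itv /= lte_fin ab ltry.
- apply: (measurableT_comp (measurable_realfun.measurable_powR _)).
  apply: measurable_funS measurableT (@subsetT _ _) _.
  exact: measurable_realfun.continuous_measurable_fun cf.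
- exists (M `^ t); split; first exact: num_real.
  move=> N MN x _ /=; rewrite ger0_norm ?powR_ge0 //; apply: le_trans (ltW MN).
  by apply: (ge0_ler_powR t0); rewrite ?nnegrE ?(le_trans (f_ge0 x)).
Qed.

Lemma Rintegral_powR_le_sup (n : nat) t : n%:R < t ->
  \int[mu]_(x in `[a, b]) f x `^ t
    <= M `^ (t - n%:R) * \int[mu]_(x in `[a, b]) f x ^+ n.
Proof.
move=> nt; have t0 : 0 < t by apply: le_lt_trans nt.
rewrite -RintegralZl //; last exact: continuous_integrable_itv.
apply: le_Rintegral => //; first exact: integrable_powR (ltW t0).
- apply: continuous_integrable_itv => x.
  apply: (@continuousM _ _ (fun=> _) (fun y => f y ^+ n)); first exact: cst_continuous.
  exact: continuous_fX.
move=> x _; rewrite -powR_mulrn // -[in leLHS](subrK n%:R t) powRD ?subrK ?(gt_eqF t0) //.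
apply: ler_wpM2r; first exact: powR_ge0.
have tn0 : 0 <= t - n%:R by rewrite subr_ge0 ltW.
by apply: (ge0_ler_powR tn0); rewrite ?nnegrE ?(le_trans (f_ge0 x)).
Qed.

Lemma Rintegral_powR_le_mean (n : nat) t m : 0 < t -> t < n%:R -> 0 < m ->
  \int[mu]_(x in `[a, b]) f x ^+ n = (b - a) * m ->
  \int[mu]_(x in `[a, b]) f x `^ t <= (b - a) * m `^ (t / n%:R).
Proof.
move=> t0 tn m0 int_fn; have n0 : 0 < n%:R :> R by apply: lt_trans tn.
set p := t / n%:R; have p0 : 0 < p by rewrite divr_gt0.
have p1 : p < 1 by rewrite ltr_pdivrMr // mul1r.
apply: (@le_trans _ _ (\int[mu]_(x in `[a, b])
    (m `^ p * (p / m) * f x ^+ n + m `^ p * (1 - p)))).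
  apply: le_Rintegral => //; first exact: integrable_powR (ltW t0).
    exact/continuous_integrable_itv/continuous_affine.
  move=> x _; rewrite -mulrA -mulrDr.
  have -> : f x `^ t = (f x ^+ n) `^ p.
    by rewrite -powR_mulrn // -powRrM /p mulrCA mulfV ?gt_eqF // mulr1.
  by apply: powR_le_tangent; rewrite ?exprn_ge0.
rewrite Rintegral_affine ?(ltW ab) // int_fn [leLHS](_ : _ = (b - a) * m `^ p) //.
by field; rewrite gt_eqF.
Qed.
End power_interpolation.

Section Gpm.
Context {R : realType}.
Local Notation mu := (@lebesgue_measure R).
Local Open Scope complex_scope.

Lemma Gpm_sqr_norm s k (x : R) : (Gpm s k x)%:C =
  `|1 + expi (2 * pi * x) + (if s then 1 else -1)%:C * expi (2 * pi * x) ^+ k.+2| ^+ 2.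
Proof.
rewrite sqr_normc expiX /Gpm /=.
rewrite (_ : 2 * pi * (k.+2)%:R * x = (k.+2)%:R * (2 * pi * x)); last by ring.
by rewrite !mul0r subr0 addr0 add0r.
Qed.

Lemma GpmX s k rho (x : R) : Gpm s k x ^+ rho =
  trigpoly_norm2 (trinomial_coef rho (if s then 1 else -1))
    (trinomial_exp k.+2 rho) (2 * pi * x).
Proof.
apply: (@complexI R); rewrite rmorphXn /= Gpm_sqr_norm -exprM mulnC exprM -normrX.
rewrite trinomial_expansion -sqr_norm_trigpoly; congr (`|_| ^+ 2); apply: eq_bigr => p _.
by rewrite /trinomial_coef (rmorphM (real_complex R)) rmorph_nat rmorphXn.
Qed.

Lemma continuous_Gpm s k : continuous (@Gpm R s k).
Proof.
have -> : @Gpm R s k = fun x => Gpm s k x ^+ 1 by apply/funext => x; rewrite expr1.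
under eq_fun do rewrite GpmX.
move=> x; apply: continuous_comp; first exact: mulrl_continuous.
exact: continuous_trigpoly_norm2.
Qed.

Lemma Rintegral_GpmX s k rho : (rho <= k.+1)%N ->
  \int[mu]_(x in `[0, 2^-1]) (Gpm s k x ^+ rho) = 2^-1 * (A rho)%:R.
Proof.
move=> le_rho_k; under eq_Rintegral do rewrite GpmX.
rewrite Rintegral_trigpoly_norm2 sum_mul_eq_sqr ?sum_trinomial_coef_sqr //.
  by case: s; rewrite ?sqrrN expr1n.
move=> p q; rewrite !inE => p0 q0; apply: trinomial_exp_inj => //; rewrite inE leqNgt.
  by apply: contra p0 => /trinomial_coef_eq0 ->.
by apply: contra q0 => /trinomial_coef_eq0 ->.
Qed.

Lemma Gpm_ge0 s k (x : R) : 0 <= Gpm s k x.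
Proof. by rewrite /Gpm addr_ge0 // sqr_ge0. Qed.

Lemma Gpm_le9 s k (x : R) : Gpm s k x <= 9.
Proof.
rewrite /Gpm; set a := cos _; set b := sin _; set c := cos _; set d := sin _.
have ab1 : a ^+ 2 + b ^+ 2 = 1 by rewrite cos2Dsin2.
have cd1 : c ^+ 2 + d ^+ 2 = 1 by rewrite cos2Dsin2.
have := sqr_ge0 (1 - a); have := sqr_ge0 b; have := sqr_ge0 d.
case: s => /=.
  by have := sqr_ge0 (a - c); have := sqr_ge0 (b - d); have := sqr_ge0 (1 - c); nra.
by have := sqr_ge0 (a + c); have := sqr_ge0 (b + d); have := sqr_ge0 (1 + c); nra.
Qed.
End Gpm.

Theorem proposition1 (R : realType) (k rho : nat) (tau : R) (s : bool) :
  (rho <= k.+1)%N -> 0 < tau ->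
  (rho%:R < tau ->
     Rintegral lebesgue_measure `[0, 2^-1] (fun x => Gpm s k x `^ tau)
       <= 2^-1 * (9 `^ (tau - rho%:R)) * (A rho)%:R) /\
  (tau < rho%:R ->
     Rintegral lebesgue_measure `[0, 2^-1] (fun x => Gpm s k x `^ tau)
       <= 2^-1 * ((A rho)%:R `^ (tau / rho%:R))).
Proof.
move=> le_rho_k tau_gt0; have half_gt0 : (0 : R) < 2^-1 by rewrite invr_gt0.
have cG := @continuous_Gpm R s k; have G0 := @Gpm_ge0 R s k; have G9 := @Gpm_le9 R s k.
have int_GX := @Rintegral_GpmX R s k rho le_rho_k.
split=> [rho_lt_tau|tau_lt_rho].
  apply: le_trans (Rintegral_powR_le_sup half_gt0 cG G0 G9 rho tau rho_lt_tau) _.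
  by rewrite int_GX mulrCA mulrA.
rewrite -[X in X * _](subr0 2^-1).
apply: (Rintegral_powR_le_mean half_gt0 cG G0 G9) => //.
  by rewrite ltr0n A_gt0.
by rewrite int_GX subr0.
Qed.
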